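(* Let $G=(V,E)$ be a Bitcoin network, let $N,P\in V$, and let $M\in\Gamma$ be a legitimate monitor. Suppose $M$ executes the procedure $PeeV(N)$ and the nodes $N$ and $P$ execute the procedure $HandleMarker$ on every marker message they receive. Then the output $L_N^M$ of $PeeV(N)$ satisfies $$P\in L_N^M \iff (N,P)\in E.$$
   Context: A Bitcoin network is modeled as a directed graph $G=(V,E)$ whose vertices are the (reachable) nodes; $(N,P)\in E$, also written $N\to P$, means that $N$ has an outbound connection to $P$. For a node $X$, its outbound peers are $O_X=\{Y:(X,Y)\in E\}$ and its inbound peers are $I_X=\{Y:(Y,X)\in E\}$. $\Gamma$ is a fixed set of legitimate monitors; each monitor is connected to every node, and these monitor connections are not part of $E$. A marker message is a triple $[N,M,r]$ (target $N$, monitor $M$, value $r$). Procedure $PeeV(N)$, run by monitor $M$: start with an empty list $L_N^M$; draw a random value $r$; send the marker $[N,M,r]$ to $N$; until a timeout $t$ expires, whenever a marker is received from some node $P$ and it equals $[N,M,r]$, set $L_N^M:=L_N^M\cup\{P\}$; when the timeout expires, output $L_N^M$. Procedure $HandleMarker(pfrom,[N,M,r])$, run by a node $X$ on receiving a marker from sender $pfrom$: if $pfrom=M$ and $M\in\Gamma$, send the marker to every outbound peer of $X$; if $pfrom=N$ and $N$ is an inbound peer of $X$, send the marker to $M$; otherwise do nothing. Standing assumptions of this result: all nodes are honest (follow the procedures), no connection is established or dropped during the execution, and every sent message is delivered, with the timeout $t$ longer than the time needed for a marker to travel $M\to N\to P\to M$. *)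

From Stdlib Require Import Arith.

Set Implicit Arguments.

Record marker (Ent : Type) := Marker { mk_target : Ent; mk_monitor : Ent; mk_value : nat }.
Arguments Marker {Ent}.

Section Protocol.
Variable Ent : Type.              (* all participants: nodes and monitors *)
Variable V : Ent -> Prop.
Variable Gamma : Ent -> Prop.
Variable E : Ent -> Ent -> Prop.  (* E X Y : X has an outbound connection to Y *)

(* HandleMarker run by node X on receiving marker m from pfrom:
   handle X pfrom m Y  <->  X sends m to Y. *)
Definition handle (X pfrom : Ent) (m : marker Ent) (Y : Ent) : Prop :=
  (pfrom = mk_monitor m /\ Gamma (mk_monitor m) /\ E X Y)
  \/ (~ (pfrom = mk_monitor m /\ Gamma (mk_monitor m)) /\
      pfrom = mk_target m /\ E (mk_target m) X /\ Y = mk_monitor m).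

(* Execution of PeeV(N) by monitor M with value r, where every node of V
   (all honest) runs HandleMarker, every message is delivered, and a
   message sent from A to B at time s arrives at time s + dl A B.
   delivered A B m s : marker m sent by A arrives at B at time s. *)
Inductive delivered (M N : Ent) (r : nat) (dl : Ent -> Ent -> nat)
  : Ent -> Ent -> marker Ent -> nat -> Prop :=
| deliv_start : delivered M N r dl M N (Marker N M r) (dl M N)
| deliv_fwd : forall pfrom X Y m s,
    delivered M N r dl pfrom X m s -> V X -> handle X pfrom m Y ->
    delivered M N r dl X Y m (s + dl X Y).

(* Output L_N^M of PeeV(N): senders of the marker [N,M,r] received by M
   before the timeout t (PeeV starts at time 0). *)
Definition PeeV_output (M N : Ent) (r : nat) (dl : Ent -> Ent -> nat) (t : nat)
  (Q : Ent) : Prop :=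
  exists s, s <= t /\ delivered M N r dl Q M (Marker N M r) s.

End Protocol.

From Stdlib Require Import Lia.

(* A monitor is not a node, so a node never forwards a marker to it along an
   edge of G; the only way a marker reaches a monitor is as the reply of a
   node X that received it from its target N with N -> X.  Hence the senders
   of [N,M,r] to M are exactly the outbound peers of N, and each of them
   replies within the delay of the round trip M -> N -> P -> M, which is
   shorter than the timeout. *)

Section Markers.
Context {Ent : Type} {V Gamma : Ent -> Prop} {E : Ent -> Ent -> Prop}.
Hypothesis edges_between_nodes : forall x y, E x y -> V x /\ V y.

Lemma handle_to_non_node {X pfrom m Y} :
  ~ V Y -> handle Gamma E X pfrom m Y ->
  pfrom = mk_target m /\ E (mk_target m) X /\ Y = mk_monitor m.
Proof.
  intros hY [[_ [_ hXY]] | [_ hreply]].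
  - exfalso; exact (hY (proj2 (edges_between_nodes _ _ hXY))).
  - exact hreply.
Qed.

Lemma delivered_to_non_node {M N r dl Q B m s} :
  V N -> ~ V B -> delivered V Gamma E M N r dl Q B m s ->
  E (mk_target m) Q /\ B = mk_monitor m.
Proof.
  intros hN hB hdel; destruct hdel as [| pfrom X Y m s _ _ hhandle].
  - exfalso; exact (hB hN).
  - destruct (handle_to_non_node hB hhandle) as [_ [hXY ->]]; auto.
Qed.

Lemma delivered_round_trip M N P r dl :
  Gamma M -> N <> M -> E N P ->
  delivered V Gamma E M N r dl P M (Marker N M r) (dl M N + dl N P + dl P M).
Proof.
  intros hM hNM hNP.
  destruct (edges_between_nodes _ _ hNP) as [hN hP].
  apply deliv_fwd with (pfrom := N); [| exact hP |].
  - apply deliv_fwd with (pfrom := M); [apply deliv_start | exact hN |].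
    left; simpl; auto.
  - right; simpl; split; [intros [hNM' _]; exact (hNM hNM') | auto].
Qed.

End Markers.

Theorem theorem1 (Ent : Type) (V Gamma : Ent -> Prop) (E : Ent -> Ent -> Prop)
  (hE : forall x y, E x y -> V x /\ V y)
  (hmon : forall x, Gamma x -> ~ V x)
  (N P M : Ent) (hN : V N) (hP : V P) (hM : Gamma M)
  (r : nat) (dl : Ent -> Ent -> nat) (t : nat)
  (htimeout : dl M N + dl N P + dl P M < t) :
  PeeV_output V Gamma E M N r dl t P <-> E N P.
Proof.
  split.
  - intros [s [_ hdel]].
    exact (proj1 (delivered_to_non_node hE hN (hmon M hM) hdel)).
  - intros hNP; exists (dl M N + dl N P + dl P M); split; [lia |].
    apply delivered_round_trip; auto.
    intros hNM; apply (hmon M hM); rewrite <- hNM; exact hN.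
Qed.
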